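(* Fix real numbers $\{\Theta_{kj}\}_{k,j\in[K]}$. For $\mathbf{P}\in[0,1]^K$ and $(\boldsymbol{\alpha},\boldsymbol{\gamma})\in[-\pi,\pi)^{2K}$ let $\beta_{kj}=\cos^2(\alpha_j+\Theta_{kj}-\Theta_{jj}-\gamma_k)$ and $R_{sum}(\mathbf{P},\boldsymbol{\alpha},\boldsymbol{\gamma})=\sum_{k=1}^K\ln\!\left(1+\frac{P_k\beta_{kk}}{\sum_{j\ne k}P_j\beta_{kj}+\frac12}\right)$. Let $\mathcal{S}\subset[K]$ with $|\mathcal{S}|=s\ge 1$, and let $(\boldsymbol{\alpha},\boldsymbol{\gamma}),(\boldsymbol{\alpha}',\boldsymbol{\gamma}')\in[-\pi,\pi)^{2K}$ satisfy $\max_{k\in\mathcal{S}}\max(|\alpha_k-\alpha_k'|,|\gamma_k-\gamma_k'|)\le\frac{1}{2s^2}$. Then $$\left|R_{sum}(\mathbf{1}_{\mathcal{S}},\boldsymbol{\alpha},\boldsymbol{\gamma})-R_{sum}(\mathbf{1}_{\mathcal{S}},\boldsymbol{\alpha}',\boldsymbol{\gamma}')\right|\le 4,$$ where $\mathbf{1}_{\mathcal{S}}\in\{0,1\}^K$ has $k$-th component $1$ if $k\in\mathcal{S}$ and $0$ otherwise. *)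

(* concrete reals R. Indices [K] = {0,...,K-1}. *)
From Stdlib Require Import Reals List.
Import ListNotations.
Open Scope R_scope.

Definition sumK (K : nat) (f : nat -> R) : R :=
  fold_right Rplus 0 (map f (seq 0 K)).

Definition beta (Theta : nat -> nat -> R) (alpha gamma : nat -> R) (k j : nat) : R :=
  (cos (alpha j + Theta k j - Theta j j - gamma k)) ^ 2.

Definition Rsum (K : nat) (Theta : nat -> nat -> R) (P alpha gamma : nat -> R) : R :=
  sumK K (fun k =>
    ln (1 + P k * beta Theta alpha gamma k k /
            (sumK K (fun j => if Nat.eqb j k then 0
                              else P j * beta Theta alpha gamma k j) + /2))).

Definition indic (S : list nat) (k : nat) : R :=
  if in_dec Nat.eq_dec k S then 1 else 0.

Definition in_box (K : nat) (a : nat -> R) : Prop :=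
  forall k, (k < K)%nat -> -PI <= a k < PI.

(** Each user [k ∈ S] contributes [ln (I_k + 1/2 + β_kk) - ln (I_k + 1/2)], where the
    interference [I_k] is a sum of at most [s - 1] coefficients [β_kj ∈ [0, 1]].
    Since [cos²] is 1-Lipschitz, each [β] moves by at most [1/s²], so [I_k] moves by at
    most [(s - 1)/s²]; as [ln] is 2-Lipschitz on [[1/2, ∞)], each of the [s] active
    terms moves by at most [4/s]. *)
From Stdlib Require Import Reals List Lra Lia.
Open Scope R_scope.

Definition sumL (l : list nat) (f : nat -> R) : R := fold_right Rplus 0 (map f l).

Lemma sumL_minus l f g : sumL l f - sumL l g = sumL l (fun x => f x - g x).
Proof. induction l as [|a l IH]; unfold sumL in *; simpl; [ring|]. rewrite <- IH; ring. Qed.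

Lemma sumL_scal l c f : sumL l (fun x => c * f x) = c * sumL l f.
Proof. induction l as [|a l IH]; unfold sumL in *; simpl; [ring|]. rewrite IH; ring. Qed.

Lemma sumL_le l f g : (forall x, In x l -> f x <= g x) -> sumL l f <= sumL l g.
Proof.
  induction l as [|a l IH]; intros H; unfold sumL in *; simpl; [lra|].
  apply Rplus_le_compat; [apply H; left | apply IH; intros; apply H; right]; auto.
Qed.

Lemma sumL_nonneg l f : (forall x, 0 <= f x) -> 0 <= sumL l f.
Proof.
  intros H; apply Rle_trans with (sumL l (fun _ => 0)); [|apply sumL_le; auto].
  induction l; unfold sumL in *; simpl; lra.
Qed.

Lemma Rabs_sumL_le l f g : (forall x, In x l -> Rabs (f x) <= g x) -> Rabs (sumL l f) <= sumL l g.
Proof.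
  induction l as [|a l IH]; intros H; unfold sumL in *; simpl.
  - rewrite Rabs_R0; lra.
  - eapply Rle_trans; [apply Rabs_triang|].
    apply Rplus_le_compat; [apply H; left | apply IH; intros; apply H; right]; auto.
Qed.

Lemma indic_in S k : In k S -> indic S k = 1.
Proof. intros h; unfold indic; destruct (in_dec Nat.eq_dec k S); [auto|contradiction]. Qed.

Lemma indic_notin S k : ~ In k S -> indic S k = 0.
Proof. intros h; unfold indic; destruct (in_dec Nat.eq_dec k S); [contradiction|auto]. Qed.

Lemma indic_bounds S k : 0 <= indic S k <= 1.
Proof. unfold indic; destruct (in_dec Nat.eq_dec k S); lra. Qed.

Lemma indic_remove S k j : indic (remove Nat.eq_dec k S) j = if Nat.eqb j k then 0 else indic S j.
Proof.
  destruct (Nat.eqb_spec j k) as [->|hjk].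
  - apply indic_notin, remove_In.
  - destruct (in_dec Nat.eq_dec j S) as [hj|hj].
    + rewrite !indic_in; auto using in_in_remove.
    + rewrite !indic_notin; auto. intros h; apply hj, (in_remove _ _ _ _ h).
Qed.

Lemma sumL_indic_filter l S :
  sumL l (indic S) = INR (length (filter (fun k => if in_dec Nat.eq_dec k S then true else false) l)).
Proof.
  induction l as [|a l IH]; [reflexivity|].
  unfold sumL in *; simpl. rewrite IH. unfold indic.
  destruct (in_dec Nat.eq_dec a S); simpl length; [rewrite S_INR|]; ring.
Qed.

Lemma sumL_indic_le l S : NoDup l -> sumL l (indic S) <= INR (length S).
Proof.
  intros Hl. rewrite sumL_indic_filter. apply le_INR, NoDup_incl_length.
  - apply NoDup_filter, Hl.
  - intros x hx. apply filter_In in hx as [_ hx].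
    destruct (in_dec Nat.eq_dec x S); [auto|discriminate].
Qed.

Lemma sumL_indic_mul_close l T g g' δ :
  (forall j, In j T -> Rabs (g j - g' j) <= δ) ->
  Rabs (sumL l (fun j => indic T j * g j) - sumL l (fun j => indic T j * g' j))
    <= δ * sumL l (indic T).
Proof.
  intros Hclose. rewrite sumL_minus, <- sumL_scal. apply Rabs_sumL_le. intros j _.
  destruct (in_dec Nat.eq_dec j T) as [hj|hj].
  - rewrite indic_in by auto. replace (1 * g j - 1 * g' j) with (g j - g' j) by ring.
    rewrite Rmult_1_r. auto.
  - rewrite indic_notin by auto.
    replace (0 * g j - 0 * g' j) with 0 by ring. rewrite Rabs_R0, Rmult_0_r. lra.
Qed.

Lemma Rabs_sin_le x : Rabs (sin x) <= Rabs x.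
Proof.
  assert (Hpos : forall y, 0 < y -> Rabs (sin y) <= y).
  { intros y Hy. pose proof (sin_lt_x y Hy). pose proof (SIN_bound y).
    destruct (Rle_dec 1 y).
    - unfold Rabs; destruct (Rcase_abs (sin y)); lra.
    - pose proof (sin_pos_tech y ltac:(lra)). rewrite Rabs_right; lra. }
  destruct (Rtotal_order x 0) as [h|[->|h]].
  - rewrite <- Rabs_Ropp, <- sin_neg, (Rabs_left x) by lra. apply Hpos; lra.
  - rewrite sin_0, Rabs_R0; lra.
  - rewrite (Rabs_right x) by lra. apply Hpos; lra.
Qed.

Lemma Rabs_cos_sub_le x y : Rabs (cos x - cos y) <= Rabs (x - y).
Proof.
  rewrite form2, !Rabs_mult.
  pose proof (Rabs_sin_le ((x - y) / 2)).
  pose proof (SIN_bound ((x + y) / 2)).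
  assert (Rabs (sin ((x + y) / 2)) <= 1) by (unfold Rabs; destruct Rcase_abs; lra).
  assert (Rabs ((x - y) / 2) = Rabs (x - y) / 2) by (unfold Rabs; repeat destruct Rcase_abs; lra).
  assert (Rabs (-2) = 2) by (unfold Rabs; destruct Rcase_abs; lra).
  pose proof (Rabs_pos (sin ((x - y) / 2))).
  pose proof (Rabs_pos (sin ((x + y) / 2))).
  nra.
Qed.

Lemma Rabs_cos_sq_sub_le x y : Rabs (cos x ^ 2 - cos y ^ 2) <= Rabs (x - y).
Proof.
  replace (cos x ^ 2 - cos y ^ 2) with ((cos (2 * x) - cos (2 * y)) / 2)
    by (rewrite !cos_2a_cos; field).
  pose proof (Rabs_cos_sub_le (2 * x) (2 * y)).
  revert H. unfold Rabs; repeat destruct Rcase_abs; lra.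
Qed.

Lemma ln_sub_le x y : 0 < x -> 1/2 <= y -> ln x - ln y <= 2 * Rabs (x - y).
Proof.
  intros Hx Hy.
  assert (Hiy : 0 < / y) by (apply Rinv_0_lt_compat; lra).
  replace (ln x - ln y) with (ln (x * / y))
    by (rewrite ln_mult, ln_Rinv by lra; ring).
  assert (Hln : ln (x * / y) <= x * / y - 1).
  { pose proof (exp_ineq1_le (ln (x * / y))).
    rewrite exp_ln in H by (apply Rmult_lt_0_compat; lra). lra. }
  replace (x * / y - 1) with ((x - y) * / y) in Hln by (field; lra).
  assert (/ y <= 2) by (apply (Rmult_le_reg_l y); [lra|]; field_simplify; lra).
  pose proof (Rle_abs (x - y)). pose proof (Rabs_pos (x - y)).
  nra.
Qed.

Lemma Rabs_ln_sub_le x y : 1/2 <= x -> 1/2 <= y -> Rabs (ln x - ln y) <= 2 * Rabs (x - y).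
Proof.
  intros Hx Hy.
  pose proof (ln_sub_le x y ltac:(lra) Hy).
  pose proof (ln_sub_le y x ltac:(lra) Hx).
  rewrite Rabs_minus_sym in H0.
  unfold Rabs at 1; destruct Rcase_abs; lra.
Qed.

Lemma Rabs_rate_sub_le D D' b b' e c :
  0 <= D -> 0 <= D' -> 0 <= b -> 0 <= b' ->
  Rabs (D - D') <= e -> Rabs (b - b') <= c ->
  Rabs (ln (1 + b / (D + /2)) - ln (1 + b' / (D' + /2))) <= 4 * e + 2 * c.
Proof.
  intros HD HD' Hb Hb' HDe Hbc.
  assert (Hsplit : forall D b, 0 <= D -> 0 <= b ->
            ln (1 + b / (D + /2)) = ln (D + /2 + b) - ln (D + /2)).
  { intros D0 b0 ? ?.
    replace (1 + b0 / (D0 + /2)) with ((D0 + /2 + b0) * / (D0 + /2)) by (field; lra).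
    rewrite ln_mult, ln_Rinv by (try apply Rinv_0_lt_compat; lra). ring. }
  rewrite !Hsplit by auto.
  pose proof (Rabs_ln_sub_le (D + /2 + b) (D' + /2 + b') ltac:(lra) ltac:(lra)) as Hnum.
  pose proof (Rabs_ln_sub_le (D + /2) (D' + /2) ltac:(lra) ltac:(lra)) as Hden.
  replace (D + /2 + b - (D' + /2 + b')) with ((D - D') + (b - b')) in Hnum by ring.
  replace (D + /2 - (D' + /2)) with (D - D') in Hden by ring.
  pose proof (Rabs_triang (D - D') (b - b')).
  replace (ln (D + /2 + b) - ln (D + /2) - (ln (D' + /2 + b') - ln (D' + /2)))
    with ((ln (D + /2 + b) - ln (D' + /2 + b')) + - (ln (D + /2) - ln (D' + /2))) by ring.
  pose proof (Rabs_triang (ln (D + /2 + b) - ln (D' + /2 + b'))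
                          (- (ln (D + /2) - ln (D' + /2)))).
  rewrite Rabs_Ropp in *. lra.
Qed.

Lemma beta_bounds Theta al ga k j : 0 <= beta Theta al ga k j <= 1.
Proof. unfold beta. pose proof (COS_bound (al j + Theta k j - Theta j j - ga k)). nra. Qed.

Lemma Rabs_beta_sub_le Theta al ga al' ga' k j :
  Rabs (beta Theta al ga k j - beta Theta al' ga' k j) <= Rabs (al j - al' j) + Rabs (ga k - ga' k).
Proof.
  unfold beta. eapply Rle_trans; [apply Rabs_cos_sq_sub_le|].
  replace (al j + Theta k j - Theta j j - ga k - (al' j + Theta k j - Theta j j - ga' k))
    with ((al j - al' j) + - (ga k - ga' k)) by ring.
  eapply Rle_trans; [apply Rabs_triang|]. rewrite Rabs_Ropp; lra.
Qed.

Definition interference K Theta (P alpha gamma : nat -> R) (k : nat) : R :=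
  sumK K (fun j => if Nat.eqb j k then 0 else P j * beta Theta alpha gamma k j).

Lemma Rsum_interference K Theta P al ga :
  Rsum K Theta P al ga
  = sumL (seq 0 K) (fun k => ln (1 + P k * beta Theta al ga k k
                                     / (interference K Theta P al ga k + /2))).
Proof. reflexivity. Qed.

Lemma interference_indic K Theta S al ga k :
  interference K Theta (indic S) al ga k
  = sumL (seq 0 K) (fun j => indic (remove Nat.eq_dec k S) j * beta Theta al ga k j).
Proof.
  unfold interference, sumK, sumL. f_equal. apply map_ext; intros j. rewrite indic_remove.
  destruct (Nat.eqb j k); ring.
Qed.

Lemma interference_indic_nonneg K Theta S al ga k : 0 <= interference K Theta (indic S) al ga k.
Proof.
  rewrite interference_indic. apply sumL_nonneg; intros j.
  apply Rmult_le_pos; [apply indic_bounds | apply beta_bounds].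
Qed.

Lemma Rabs_interference_indic_sub_le K Theta S al ga al' ga' k δ :
  In k S ->
  (forall k j, In k S -> In j S ->
     Rabs (beta Theta al ga k j - beta Theta al' ga' k j) <= δ) ->
  Rabs (interference K Theta (indic S) al ga k - interference K Theta (indic S) al' ga' k)
    <= δ * (INR (length S) - 1).
Proof.
  intros hk Hbeta. rewrite !interference_indic.
  eapply Rle_trans.
  { apply sumL_indic_mul_close. intros j hj.
    apply Hbeta; [|apply (in_remove _ _ _ _ hj)]; auto. }
  assert (Hlen : INR (length (remove Nat.eq_dec k S)) <= INR (length S) - 1).
  { pose proof (remove_length_lt Nat.eq_dec S k hk).
    replace (INR (length S) - 1) with (INR (length S - 1)) by (rewrite minus_INR by lia; simpl; ring).
    apply le_INR; lia. }
  pose proof (sumL_indic_le (seq 0 K) (remove Nat.eq_dec k S) (seq_NoDup K 0)).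
  assert (0 <= δ) by (eapply Rle_trans; [apply Rabs_pos | apply (Hbeta k k hk hk)]).
  apply Rmult_le_compat_l; lra.
Qed.

Lemma Rabs_Rsum_indic_sub_le K Theta S al ga al' ga' δ :
  0 <= δ ->
  (forall k j, In k S -> In j S ->
     Rabs (beta Theta al ga k j - beta Theta al' ga' k j) <= δ) ->
  Rabs (Rsum K Theta (indic S) al ga - Rsum K Theta (indic S) al' ga')
    <= 4 * δ * INR (length S) ^ 2.
Proof.
  intros Hδ Hbeta. set (s := INR (length S)).
  assert (Hterm : forall k, In k (seq 0 K) ->
    Rabs (ln (1 + indic S k * beta Theta al ga k k
                    / (interference K Theta (indic S) al ga k + /2))
          - ln (1 + indic S k * beta Theta al' ga' k k
                    / (interference K Theta (indic S) al' ga' k + /2)))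
      <= 4 * δ * s * indic S k).
  { intros k _. destruct (in_dec Nat.eq_dec k S) as [hk|hk].
    - rewrite indic_in, !Rmult_1_l, Rmult_1_r by auto.
      eapply Rle_trans.
      { apply Rabs_rate_sub_le;
          [apply interference_indic_nonneg | apply interference_indic_nonneg
          | apply beta_bounds | apply beta_bounds
          | apply Rabs_interference_indic_sub_le; eauto | apply Hbeta; eauto]. }
      fold s. lra.
    - rewrite indic_notin by auto. unfold Rdiv. rewrite !Rmult_0_l, Rplus_0_r, ln_1.
      rewrite Rminus_0_r, Rabs_R0. lra. }
  rewrite !Rsum_interference, sumL_minus. eapply Rle_trans; [apply Rabs_sumL_le, Hterm|].
  rewrite sumL_scal.
  pose proof (sumL_indic_le (seq 0 K) S (seq_NoDup K 0)). fold s in H.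
  assert (0 <= s) by apply pos_INR.
  replace (4 * δ * s ^ 2) with (4 * δ * s * s) by ring.
  apply Rmult_le_compat_l; [|auto]. repeat apply Rmult_le_pos; lra.
Qed.

Theorem lemma4 (K : nat) (Theta : nat -> nat -> R)
  (S : list nat) (alpha gamma alpha' gamma' : nat -> R) :
  NoDup S ->
  (forall k, In k S -> (k < K)%nat) ->
  (1 <= length S)%nat ->
  in_box K alpha -> in_box K gamma -> in_box K alpha' -> in_box K gamma' ->
  (forall k, In k S ->
     Rmax (Rabs (alpha k - alpha' k)) (Rabs (gamma k - gamma' k))
       <= 1 / (2 * (INR (length S)) ^ 2)) ->
  Rabs (Rsum K Theta (indic S) alpha gamma - Rsum K Theta (indic S) alpha' gamma') <= 4.
Proof.
  intros _ _ Hlen _ _ _ _ Hclose.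
  assert (Hs : 0 < INR (length S)) by (apply lt_0_INR; lia).
  set (δ := 1 / INR (length S) ^ 2).
  assert (Hbeta : forall k j, In k S -> In j S ->
    Rabs (beta Theta alpha gamma k j - beta Theta alpha' gamma' k j) <= δ).
  { intros k j hk hj.
    pose proof (Rabs_beta_sub_le Theta alpha gamma alpha' gamma' k j).
    pose proof (Rle_trans _ _ _ (Rmax_l _ _) (Hclose j hj)).
    pose proof (Rle_trans _ _ _ (Rmax_r _ _) (Hclose k hk)).
    replace δ with (1 / (2 * INR (length S) ^ 2) + 1 / (2 * INR (length S) ^ 2))
      by (unfold δ; field; lra).
    lra. }
  eapply Rle_trans; [apply (Rabs_Rsum_indic_sub_le _ _ _ _ _ _ _ δ); auto|].
  - unfold δ, Rdiv. rewrite Rmult_1_l. left; apply Rinv_0_lt_compat, pow_lt, Hs.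
  - unfold δ. right; field; lra.
Qed.
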